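(* Let $P\subseteq\mathbb{R}^n$ be an $n$-dimensional rational polytope with irredundant description $P=\{x:\langle a_i,x\rangle\ge b_i,\ i=1,\dots,m\}$, and let $l$ be the common denominator of $b_1,\dots,b_m$. Then $\mathrm{int}(lP)\cap\mathbb{Z}^n=(lP)^{(1)}\cap\mathbb{Z}^n$. In particular, $\mu(P)\le l\,\mathrm{cd}(P)$.
   Context: In the irredundant description, $a_i\in(\mathbb{Z}^n)^*$ are primitive, $b_i\in\mathbb{Q}$, and each inequality defines a facet. For an $n$-dimensional rational polytope $Q$ with such a description, $d_Q(x):=\min_i(\langle a_i,x\rangle-b_i)$ and $Q^{(s)}:=\{x:d_Q(x)\ge s\}$; note $lP$ has description $\langle a_i,x\rangle\ge lb_i$. $\mu(P):=(\sup\{s>0:P^{(s)}\neq\emptyset\})^{-1}$ is the $\mathbb{Q}$-codegree, and the codegree is $\mathrm{cd}(P):=\min\{k\in\mathbb{Z}_{\ge1}:\mathrm{int}(kP)\cap\mathbb{Z}^n\neq\emptyset\}$. The common denominator of $b_1,\dots,b_m$ is the least positive integer $l$ with $lb_i\in\mathbb{Z}$ for all $i$. *)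

From HB Require Import structures.
From mathcomp Require Import all_boot all_order all_algebra.
From mathcomp Require Import boolp classical_sets reals topology normedtype.
Set Implicit Arguments. Unset Strict Implicit. Unset Printing Implicit Defensive.
Import Order.TTheory GRing.Theory Num.Theory.
Import numFieldNormedType.Exports.
Local Open Scope classical_set_scope.
Local Open Scope ring_scope.

Definition pairing (R : realType) (n : nat) (a : 'I_n -> int) (x : 'rV[R]_n) : R :=
  \sum_(j < n) (a j)%:~R * x ord0 j.

Definition primitive (n : nat) (a : 'I_n -> int) : Prop :=
  forall d : int, (forall j, (d %| a j)%Z) -> `|d| = 1.

Definition polyh (R : realType) (n m : nat) (a : 'I_m -> 'I_n -> int)
    (b : 'I_m -> R) : set 'rV[R]_n :=
  [set x | forall i, b i <= pairing (a i) x].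

(* Q^{(s)} = {x : d_Q(x) >= s}, with d_Q(x) = min_i (<a_i,x> - b_i);
   d_Q(x) >= s unfolds to: for all i, <a_i,x> - b_i >= s. *)
Definition shrink (R : realType) (n m : nat) (a : 'I_m -> 'I_n -> int)
    (b : 'I_m -> R) (s : R) : set 'rV[R]_n :=
  [set x | forall i, s <= pairing (a i) x - b i].

Definition Zpts (R : realType) (n : nat) : set 'rV[R]_n :=
  [set x | forall j, x ord0 j \is a Num.int].

Definition dilate (R : realType) (n : nat) (k : R) (S : set 'rV[R]_n) : set 'rV[R]_n :=
  [set k *: x | x in S].

Definition affdim_ge (R : realType) (n : nat) (S : set 'rV[R]_n) (d : nat) : Prop :=
  exists p : 'I_d.+1 -> 'rV[R]_n,
    (forall j, S (p j)) /\
    \rank (\matrix_(j < d) (p (lift ord0 j) - p ord0)) = d.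

Definition hasdim (R : realType) (n : nat) (S : set 'rV[R]_n) (d : nat) : Prop :=
  affdim_ge S d /\ ~ affdim_ge S d.+1.

Definition is_facet_ineq (R : realType) (n m : nat) (a : 'I_m -> 'I_n -> int)
    (b : 'I_m -> R) (i : 'I_m) : Prop :=
  hasdim (polyh a b `&` [set x | pairing (a i) x = b i]) n.-1.

Definition Qcodegree (R : realType) (n m : nat) (a : 'I_m -> 'I_n -> int)
    (b : 'I_m -> R) : R :=
  (sup [set s : R | 0 < s /\ shrink a b s !=set0])^-1.

Definition cd_pred (R : realType) (n : nat) (P : set 'rV[R]_n) (k : nat) : bool :=
  `[< (0 < k)%N /\ (interior (dilate k%:R P) `&` @Zpts R n) !=set0 >].

Definition codegree (R : realType) (n : nat) (P : set 'rV[R]_n) : nat :=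
  match pselect (exists k, cd_pred P k) with
  | left h => ex_minn h
  | right _ => 0%N
  end.

Definition common_den (m : nat) (b : 'I_m -> rat) (l : nat) : Prop :=
  [/\ (0 < l)%N, (forall i, l%:R * b i \is a Num.int) &
      forall k : nat, (0 < k)%N -> (forall i, k%:R * b i \is a Num.int) -> (l <= k)%N].

From HB Require Import structures.
From mathcomp Require Import all_boot all_order all_algebra.
From mathcomp Require Import boolp classical_sets reals topology normedtype.
From mathcomp Require Import ring lra.
Import Order.TTheory GRing.Theory Num.Theory.
Import numFieldNormedType.Exports.
Local Open Scope classical_set_scope.
Local Open Scope ring_scope.

(* The interior of {x : <a_i,x> >= c_i} with nonzero normals a_i is the
   strict polyhedron {x : <a_i,x> > c_i}.  At a lattice point x of lP the
   numbers <a_i,x> - l b_i are integers, so they are positive exactly when they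
   are >= 1; this is the identity int(lP) ∩ Z^n = (lP)^(1) ∩ Z^n.  A lattice
   point x of int(kP) gives l<a_i,x> - lk b_i >= 1, i.e. x/k lies in
   P^(1/(lk)), whence mu(P) <= lk.  When no dilate kP has an interior lattice
   point, every P^(s), s > 0, is empty (rounding K y down for a point y of
   P^(s) and K > (sum |a_ij|)/s gives one), so mu(P) = 0 as well. *)

Section Polyhedra.
Variables (R : realType) (n : nat).
Implicit Types (x y : 'rV[R]_n) (u : R).

Lemma pairingD (a : 'I_n -> int) x y :
  pairing a (x + y) = pairing a x + pairing a y.
Proof. by rewrite /pairing -big_split; apply: eq_bigr => j _; rewrite mxE mulrDr. Qed.

Lemma pairingZ (a : 'I_n -> int) u x : pairing a (u *: x) = u * pairing a x.
Proof. by rewrite /pairing mulr_sumr; apply: eq_bigr => j _; rewrite mxE mulrCA. Qed.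

Lemma pairingB (a : 'I_n -> int) x y :
  pairing a (x - y) = pairing a x - pairing a y.
Proof. by rewrite pairingD -scaleN1r pairingZ mulN1r. Qed.

Lemma pairing_delta (a : 'I_n -> int) (j : 'I_n) :
  pairing a (delta_mx ord0 j : 'rV[R]_n) = (a j)%:~R.
Proof.
rewrite /pairing (bigD1 j) //= mxE !eqxx mulr1 big1 ?addr0 // => k nkj.
by rewrite mxE (negbTE nkj) andbF mulr0.
Qed.

Lemma pairing_Zpts (a : 'I_n -> int) x : Zpts x -> pairing a x \is a Num.int.
Proof. by move=> Zx; apply: rpred_sum => j _; rewrite rpredM ?intr_int. Qed.

Lemma pairing_le_sum_norm (a : 'I_n -> int) u x :
  (forall j, `|x ord0 j| <= u) -> pairing a x <= (\sum_j `|(a j)%:~R : R|) * u.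
Proof.
move=> xu; rewrite /pairing mulr_suml; apply: ler_sum => j _.
by rewrite (le_trans (ler_norm _)) // normrM ler_wpM2l.
Qed.

Lemma interior_rowP (A : set 'rV[R]_n) x :
  interior A x <->
  exists2 e : R, 0 < e & forall y, (forall j, `|x ord0 j - y ord0 j| < e) -> A y.
Proof.
rewrite /interior /= nbhs_ballP; split=> -[e e0 Ae]; exists e => // y.
- by move=> xy; apply: Ae; split => // i j; rewrite (ord1 i); apply: xy.
- by move=> [_ xy]; apply: Ae => j; apply: xy.
Qed.

Lemma floor_row_Zpts y : Zpts (\row_j (Num.floor (y ord0 j))%:~R : 'rV[R]_n).
Proof. by move=> j; rewrite mxE intr_int. Qed.

Lemma floor_row_near y j :
  `|(y - \row_j (Num.floor (y ord0 j))%:~R) ord0 j| <= 1.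
Proof.
rewrite !mxE; set v := y ord0 j.
have := real_floor_le (num_real v); have := real_floorD1_gt (num_real v).
by rewrite intrD ler_norml => ? ?; apply/andP; split; lra.
Qed.

Variable m : nat.
Implicit Types (a : 'I_m -> 'I_n -> int) (c : 'I_m -> R).

Lemma dilate_polyh a c u :
  0 < u -> dilate u (polyh a c) = polyh a (fun i => u * c i).
Proof.
move=> u0; apply/seteqP; split.
- by move=> _ [x Px <-] i; rewrite pairingZ ler_pM2l.
- move=> y Py; exists (u^-1 *: y); last by rewrite scalerA mulfV ?gt_eqF ?scale1r.
  by move=> i; rewrite pairingZ -(ler_pM2l u0) mulrA mulfV ?gt_eqF ?mul1r.
Qed.

Lemma polyh_lt_interior a c x :
  (forall i, c i < pairing (a i) x) -> interior (polyh a c) x.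
Proof.
move=> ltx.
suff : \forall y \near x, forall i, c i <= pairing (a i) y by [].
apply: (@filter_forall _ _ (fun i y => c i <= pairing (a i) y) (nbhs x)) => i.
apply/interior_rowP; set S := \sum_j `|(a i j)%:~R : R|.
have S0 : 0 <= S by apply: sumr_ge0.
set D := pairing (a i) x - c i; have D0 : 0 < D by rewrite subr_gt0.
exists (D / (1 + S)) => [|y xy]; first by rewrite divr_gt0 // ltr_wpDr.
have : pairing (a i) (x - y) <= S * (D / (1 + S)).
  by apply: pairing_le_sum_norm => j; rewrite !mxE ltW ?xy.
have : S * (D / (1 + S)) <= D.
  by rewrite mulrA ler_pdivrMr ?ltr_wpDr //; nra.
by rewrite pairingB /D; lra.
Qed.

Lemma interior_polyh_lt a c x :
  (forall i, exists j, a i j != 0) ->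
  interior (polyh a c) x -> forall i, c i < pairing (a i) x.
Proof.
move=> a_neq0 /interior_rowP [e e0 Pnear] i.
have [j aij] := a_neq0 i.
pose t := e / 2 / (a i j)%:~R.
have aij_ge1 : 1 <= `|(a i j)%:~R : R| by rewrite norm_intr_ge1 ?intr_eq0.
have t_le : `|t| <= e / 2.
  have e2_ge0 : 0 <= e / 2 by rewrite divr_ge0 ?ltW.
  rewrite normrM normfV (ger0_norm e2_ge0); apply: ler_piMr => //.
  by rewrite invf_le1 // (lt_le_trans ltr01).
have /(_ i) : polyh a c (x - t *: delta_mx ord0 j).
  apply: Pnear => k; rewrite !mxE opprB addrC subrK normrM.
  apply: (@le_lt_trans _ _ `|t|); last by apply: le_lt_trans t_le _; lra.
  by apply: ler_piMr => //; case: (_ && _); rewrite ?normr1 ?normr0.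
rewrite pairingB pairingZ pairing_delta mulfVK ?intr_eq0 //.
have /(_ i) : polyh a c x by apply: Pnear => k; rewrite subrr normr0.
lra.
Qed.

Lemma interior_polyhE a c :
  (forall i, exists j, a i j != 0) ->
  interior (polyh a c) = [set x | forall i, c i < pairing (a i) x].
Proof.
move=> a_neq0; apply/seteqP; split => x.
- exact: interior_polyh_lt.
- exact: polyh_lt_interior.
Qed.

Lemma int_lt_addr1 u v :
  u \is a Num.int -> v \is a Num.int -> (u < v) = (u + 1 <= v).
Proof.
by move=> /intrP[p ->] /intrP[q ->]; rewrite -[1]/(1%:~R) -intrD ler_int lezD1 ltr_int.
Qed.

Lemma interior_polyh_Zpts a c :
  (forall i, exists j, a i j != 0) -> (forall i, c i \is a Num.int) ->
  interior (polyh a c) `&` @Zpts R n = shrink a c 1 `&` @Zpts R n.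
Proof.
move=> a_neq0 c_int; rewrite interior_polyhE //; apply/seteqP.
by split=> x [cx Zx]; split=> // i; have := cx i;
  rewrite int_lt_addr1 ?c_int ?pairing_Zpts //; lra.
Qed.

Lemma Qcodegree_le_inv a c s :
  0 < s -> shrink a c s !=set0 -> Qcodegree a c <= s^-1.
Proof.
move=> s0 Ss; rewrite /Qcodegree; set S := [set s | _].
have [supS|] := pselect (has_sup S); last first.
  by move=> /sup_out ->; rewrite invr0 invr_ge0 ltW.
have supS_ge : s <= sup S by apply: sup_upper_bound.
by rewrite lef_pV2 ?posrE ?(lt_le_trans s0).
Qed.

Lemma interior_dilate_Zpts_shrink a c (l k : nat) x :
  (0 < l)%N -> (0 < k)%N -> (forall i, exists j, a i j != 0) ->
  (forall i, l%:R * c i \is a Num.int) ->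
  interior (dilate k%:R (polyh a c)) x -> Zpts x ->
  shrink a c (l * k)%:R^-1 (k%:R^-1 *: x).
Proof.
move=> l0 k0 a_neq0 lc_int; rewrite dilate_polyh ?ltr0n // => intx Zx i.
have kc_lt := interior_polyh_lt _ _ _ a_neq0 intx i.
have lk0 : 0 < l%:R * k%:R :> R by rewrite mulr_gt0 ?ltr0n.
have gap_int : l%:R * pairing (a i) x - k%:R * (l%:R * c i) \is a Num.int.
  by apply: rpredB; apply: rpredM; rewrite ?natr_int ?pairing_Zpts ?lc_int.
have gap_ge1 : 1 <= l%:R * pairing (a i) x - k%:R * (l%:R * c i).
  rewrite -[X in X <= _]add0r -int_lt_addr1 ?rpred0 // subr_gt0.
  by rewrite mulrCA ltr_pM2l ?ltr0n.
rewrite pairingZ natrM -(ler_pM2l lk0) mulfV ?gt_eqF //.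
suff -> : l%:R * k%:R * (k%:R^-1 * pairing (a i) x - c i) =
          l%:R * pairing (a i) x - k%:R * (l%:R * c i) :> R by [].
by field; rewrite pnatr_eq0 -lt0n.
Qed.

Lemma shrink_exists_cd_pred a c s y :
  0 < s -> shrink a c s y -> exists k, cd_pred (polyh a c) k.
Proof.
move=> s0 Sy; pose M := \sum_i \sum_j `|(a i j)%:~R : R|.
pose K := (Num.truncn (M / s)).+1.
have MKs : M < K%:R * s by rewrite -ltr_pdivrMr //; apply: truncnS_gt.
have K0 : 0 < K%:R :> R by rewrite ltr0n.
exists K; apply/asboolP; split=> //.
exists (\row_j (Num.floor ((K%:R *: y) ord0 j))%:~R); split; last exact: floor_row_Zpts.
rewrite dilate_polyh //; apply: polyh_lt_interior => i.
have Ma : \sum_j `|(a i j)%:~R : R| <= M.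
  by rewrite /M (bigD1 i) //= lerDl sumr_ge0 // => i' _; apply: sumr_ge0.
have := pairing_le_sum_norm (a i) 1 _ (floor_row_near (K%:R *: y)).
have : K%:R * s <= K%:R * (pairing (a i) y - c i) by rewrite ler_pM2l //; apply: Sy.
by rewrite pairingB pairingZ mulrBr mulr1; lra.
Qed.

End Polyhedra.

Lemma primitive_neq0 n (a : 'I_n -> int) : primitive a -> exists j, a j != 0.
Proof.
move=> a_prim; apply/existsP; apply: contraT => /existsPn a0.
suff : `|2%:Z| = 1 by [].
by apply: a_prim => j; move: (a0 j); rewrite negbK => /eqP ->; apply: dvdz0.
Qed.

Theorem lemma1p8 (R : realType) (n m : nat) (a : 'I_m -> 'I_n -> int)
    (b : 'I_m -> rat) (l : nat) :
  let bR := fun i => ratr (b i) : R in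
  let P := polyh a bR in
  (forall i, primitive (a i)) ->
  bounded_set P ->
  hasdim P n ->
  (forall i, is_facet_ineq a bR i) ->
  common_den b l ->
  (interior (dilate l%:R P) `&` @Zpts R n =
     shrink a (fun i => l%:R * bR i) 1 `&` @Zpts R n)
  /\ Qcodegree a bR <= (l * codegree P)%:R.
Proof.
move=> bR P a_prim _ _ _ [l0 lb_int _].
have a_neq0 i : exists j, a i j != 0 by apply: primitive_neq0.
have lbR_int i : l%:R * bR i \is a Num.int.
  have /intrP[z lbz] := lb_int i.
  have -> : l%:R * bR i = ratr (l%:R * b i) by rewrite rmorphM rmorph_nat.
  by rewrite lbz ratr_int intr_int.
split; first by rewrite dilate_polyh ?ltr0n // interior_polyh_Zpts.
rewrite /codegree; case: pselect => [cdP | no_cdP].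
  case: ex_minnP => k /asboolP [k0 [x [intx Zx]]] _.
  rewrite -[X in _ <= X]invrK; apply: Qcodegree_le_inv.
    by rewrite invr_gt0 ltr0n muln_gt0 l0.
  by exists (k%:R^-1 *: x); apply: interior_dilate_Zpts_shrink.
rewrite /Qcodegree; have -> : [set s | 0 < s /\ shrink a bR s !=set0] = set0.
  apply/seteqP; split=> // s [s0 [y Sy]].
  by apply: no_cdP; apply: shrink_exists_cd_pred s0 Sy.
by rewrite sup0 invr0 muln0.
Qed.
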